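(* Let $P$ be the feasible set of the rational mixed-integer program $\min\{c^Tx : Ax\le b,\ \ell\le x\le u,\ x_j\in\mathbb{Z} \text{ for all } j\in I\}$, where $A\in\mathbb{Q}^{m\times n}$, $c\in\mathbb{Q}^n$, $b\in\mathbb{Q}^m$, $\ell,u\in(\mathbb{Q}\cup\{\pm\infty\})^n$, $I\subseteq\{1,\dots,n\}$. Let $\alpha^Tx\le\beta$ be an inequality valid for $P$, let $s\ge 0$ be a scaling factor, and let $U,L\subseteq\{1,\dots,n\}$ be disjoint index sets such that $u_i<\infty$ for all $i\in U$, $\ell_i>-\infty$ for all $i\in L$, and $\alpha_i=0$ for all $i\notin U\cup L$. Then the scaled inequality $$\sum_{i\in U}\overline{s\alpha_i}\,x_i+\sum_{i\in L}\underline{s\alpha_i}\,x_i\;\le\;\overline{s\beta+\sum_{i\in U,\,u_i>0}(\overline{s\alpha_i}-\underline{s\alpha_i})\,u_i+\sum_{i\in L,\,\ell_i<0}(\underline{s\alpha_i}-\overline{s\alpha_i})\,\ell_i}$$ is valid for $P$ and $\mathbb{F}$-representable.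
   Context: An inequality is valid for $P$ if every point of $P$ satisfies it. $\mathbb{F}\subseteq\mathbb{Q}$ denotes a fixed set of floating-point numbers (e.g. IEEE double-precision numbers). For $x\in\mathbb{Q}$, $\overline{x}:=\min\{y\in\mathbb{F}: y>x\}$ and $\underline{x}:=\max\{y\in\mathbb{F}: y<x\}$ (assumed to exist for all numbers occurring). An inequality $a^Tx\le\beta$ is $\mathbb{F}$-representable if $a\in\mathbb{F}^n$ and $\beta\in\mathbb{F}$. *)

From HB Require Import structures.
From Stdlib Require Import ClassicalEpsilon.
From mathcomp Require Import all_boot all_order all_algebra.
From mathcomp Require Import constructive_ereal.
Set Implicit Arguments. Unset Strict Implicit. Unset Printing Implicit Defensive.
Import Order.TTheory GRing.Theory Num.Theory.
Local Open Scope ring_scope.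

Definition is_up (F : pred rat) (x y : rat) : Prop :=
  [/\ y \in F, x < y & forall z, z \in F -> x < z -> y <= z].
Definition is_down (F : pred rat) (x y : rat) : Prop :=
  [/\ y \in F, y < x & forall z, z \in F -> z < x -> z <= y].

Definition has_up (F : pred rat) (x : rat) : Prop := exists y, is_up F x y.
Definition has_down (F : pred rat) (x : rat) : Prop := exists y, is_down F x y.

(* overline{x} and underline{x}; meaningful when has_up / has_down hold *)
Definition up (F : pred rat) (x : rat) : rat :=
  epsilon (inhabits x) (is_up F x).
Definition down (F : pred rat) (x : rat) : rat :=
  epsilon (inhabits x) (is_down F x).

Definition mip_set (m n : nat) (A : 'M[rat]_(m, n)) (b : 'I_m -> rat)
    (l u : 'I_n -> \bar rat) (I : {set 'I_n}) (x : 'I_n -> rat) : Prop :=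
  [/\ forall k : 'I_m, \sum_(j < n) A k j * x j <= b k,
      forall j : 'I_n, (l j <= (x j)%:E)%E /\ ((x j)%:E <= u j)%E
    & forall j : 'I_n, j \in I -> x j \is a Num.int].

Definition valid (n : nat) (P : ('I_n -> rat) -> Prop) (a : 'I_n -> rat)
    (beta : rat) : Prop :=
  forall x, P x -> \sum_(i < n) a i * x i <= beta.

Definition F_representable (F : pred rat) (n : nat) (a : 'I_n -> rat)
    (beta : rat) : Prop :=
  (forall i, a i \in F) /\ beta \in F.

From mathcomp Require Import all_boot all_order all_algebra.
From mathcomp Require Import constructive_ereal.
From mathcomp Require Import lra.
From Stdlib Require Import ClassicalEpsilon.
Import Order.TTheory GRing.Theory Num.Theory.
Local Open Scope ring_scope.

(* Multiply the valid inequality by s >= 0.  For i in U the coefficient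
   s alpha_i is rounded up, which adds (up - s alpha_i) x_i; as this error is
   nonnegative and x_i <= u_i, it is at most (up - s alpha_i) max(u_i, 0), hence
   at most (up - down) u_i when u_i > 0 and at most 0 otherwise.  Symmetrically
   for i in L with the lower bound l_i.  The sum of these slacks is added to
   s beta, and rounding the right-hand side up once more keeps validity. *)

Lemma up_spec {F : pred rat} {x : rat} : has_up F x -> is_up F x (up F x).
Proof. exact: epsilon_spec. Qed.

Lemma down_spec {F : pred rat} {x : rat} :
  has_down F x -> is_down F x (down F x).
Proof. exact: epsilon_spec. Qed.

Section RoundingError.
Variable R : realDomainType.

Lemma ler_round_up_mul (d a e x u : R) :
  d <= a <= e -> x <= u -> 0 <= u -> e * x <= a * x + (e - d) * u.
Proof. by case/andP=> ? ? ? ?; nra. Qed.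

Lemma ler_round_up_mul_npos (a e x u : R) :
  a <= e -> x <= u -> u <= 0 -> e * x <= a * x.
Proof. by move=> ? ? ?; nra. Qed.

Lemma ler_round_down_mul (d a e x l : R) :
  d <= a <= e -> l <= x -> l <= 0 -> d * x <= a * x + (d - e) * l.
Proof. by case/andP=> ? ? ? ?; nra. Qed.

Lemma ler_round_down_mul_nneg (d a x l : R) :
  d <= a -> l <= x -> 0 <= l -> d * x <= a * x.
Proof. by move=> ? ? ?; nra. Qed.

Lemma ler_round_up_ereal (d a e x : R) (u : \bar R) :
  a <= e -> (u < +oo)%E -> (x%:E <= u)%E -> ((0%:E < u)%E -> d <= a) ->
  e * x <= a * x + (if (0%:E < u)%E then (e - d) * fine u else 0).
Proof.
case: u => [u | |] //= a_le_e _; rewrite lee_fin lte_fin => x_le_u d_le_a.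
case: ltP => [u_gt0 | u_le0].
- by apply: ler_round_up_mul x_le_u (ltW u_gt0); rewrite d_le_a.
- by rewrite addr0; apply: ler_round_up_mul_npos a_le_e x_le_u u_le0.
Qed.

Lemma ler_round_down_ereal (d a e x : R) (l : \bar R) :
  d <= a -> (-oo < l)%E -> (l <= x%:E)%E -> ((l < 0%:E)%E -> a <= e) ->
  d * x <= a * x + (if (l < 0%:E)%E then (d - e) * fine l else 0).
Proof.
case: l => [l | |] //= d_le_a _; rewrite lee_fin lte_fin => l_le_x a_le_e.
case: ltP => [l_lt0 | l_ge0].
- by apply: ler_round_down_mul l_le_x (ltW l_lt0); rewrite d_le_a a_le_e.
- by rewrite addr0; apply: ler_round_down_mul_nneg d_le_a l_le_x l_ge0.
Qed.

End RoundingError.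

Lemma valid_scaled_slack n (P : ('I_n -> rat) -> Prop)
    (alpha a slack : 'I_n -> rat) (beta s r : rat) :
  valid P alpha beta -> 0 <= s ->
  (forall x, P x -> forall i, a i * x i <= s * alpha i * x i + slack i) ->
  s * beta + \sum_i slack i <= r -> valid P a r.
Proof.
move=> alpha_valid s_ge0 a_le slack_le x Px.
apply: le_trans slack_le.
apply: le_trans (ler_sum _ (fun i _ => a_le x Px i)) _.
rewrite big_split /= lerD2r.
under eq_bigr do rewrite -mulrA.
by rewrite -mulr_sumr ler_wpM2l // alpha_valid.
Qed.

Theorem lemma2 (F : pred rat) (F0 : 0 \in F)
  (m n : nat) (A : 'M[rat]_(m, n)) (b : 'I_m -> rat) (c : 'I_n -> rat)
  (l u : 'I_n -> \bar rat) (I : {set 'I_n})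
  (alpha : 'I_n -> rat) (beta s : rat) (U L : {set 'I_n}) :
  valid (mip_set A b l u I) alpha beta ->
  0 <= s ->
  [disjoint U & L] ->
  (forall i, i \in U -> (u i < +oo)%E) ->
  (forall i, i \in L -> (-oo < l i)%E) ->
  (forall i, i \notin U :|: L -> alpha i = 0) ->
  (* the floating-point neighbours of all numbers occurring exist *)
  (forall i, i \in U -> has_up F (s * alpha i)) ->
  (forall i, i \in U -> (0%:E < u i)%E -> has_down F (s * alpha i)) ->
  (forall i, i \in L -> has_down F (s * alpha i)) ->
  (forall i, i \in L -> (l i < 0%:E)%E -> has_up F (s * alpha i)) ->
  let r := s * beta
     + \sum_(i in U | (0%:E < u i)%E)
          (up F (s * alpha i) - down F (s * alpha i)) * fine (u i)
     + \sum_(i in L | (l i < 0%:E)%E)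
          (down F (s * alpha i) - up F (s * alpha i)) * fine (l i) in
  has_up F r ->
  let a := fun i : 'I_n =>
    if i \in U then up F (s * alpha i)
    else if i \in L then down F (s * alpha i) else 0 in
  valid (mip_set A b l u I) a (up F r) /\ F_representable F a (up F r).
Proof.
move=> alpha_valid s_ge0 UL_disj u_fin l_fin alpha0 upU downU downL upL r r_up.
move=> a.
have [r_in r_lt _] := up_spec r_up.
split; last first.
  split=> // i; rewrite /a; case: ifPn => [iU | _].
    by case: (up_spec (upU i iU)).
  by case: ifPn => // iL; case: (down_spec (downL i iL)).
set slackU := fun i => if (0%:E < u i)%E
  then (up F (s * alpha i) - down F (s * alpha i)) * fine (u i) else 0.
set slackL := fun i => if (l i < 0%:E)%E
  then (down F (s * alpha i) - up F (s * alpha i)) * fine (l i) else 0.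
apply: (@valid_scaled_slack _ _ alpha a (fun i =>
  (if i \in U then slackU i else 0) + (if i \in L then slackL i else 0)) beta s)
  => //; last first.
  apply: le_trans (ltW r_lt); rewrite /r big_split /= addrA.
  by rewrite !big_mkcondr /= !(big_mkcond (fun i => i \in _)).
move=> x [_ x_bnd _] i; have [l_le_x x_le_u] := x_bnd i; rewrite /a.
case: ifPn => [iU | iNU].
  rewrite (disjointFr UL_disj iU) addr0 /slackU.
  have [_ up_gt _] := up_spec (upU i iU).
  apply: ler_round_up_ereal (ltW up_gt) (u_fin i iU) x_le_u _ => u_gt0.
  by have [_ /ltW] := down_spec (downU i iU u_gt0).
case: ifPn => [iL | iNL].
  have [_ down_lt _] := down_spec (downL i iL).
  rewrite add0r /slackL.
  apply: ler_round_down_ereal (ltW down_lt) (l_fin i iL) l_le_x _.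
  by move=> l_lt0; have [_ /ltW] := up_spec (upL i iL l_lt0).
by rewrite alpha0 ?inE ?negb_or ?iNU ?iNL // !(mulr0, mul0r, addr0).
Qed.
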